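(* Let $G$ be a directed graph without self-loops with integer edge weights. Let $G'$ have vertices $u_A,u_B,u_C$ for each $u\in V(G)$ and, for every edge $(u,v)$ of $G$, edges $(u_A,v_B),(u_B,v_C),(u_C,v_A)$ of the same weight as $(u,v)$. Let $G''$ be obtained from $G'$ by deleting each edge $(u_B,v_C)$ independently with probability $1/2$ and deleting each vertex $u_A$ independently with probability $1/2$. If $G$ has no zero-weight triangle then $G''$ has no zero-weight triangle; if $G$ has a zero-weight triangle then, with probability at least $1/4$, the number of zero-weight triangles in $G''$ is odd.
   Context: A zero-weight triangle in a directed graph is a triple of vertices $a,b,c$ with edges $(a,b),(b,c),(c,a)$ whose weights sum to $0$. *)

From HB Require Import structures.
From mathcomp Require Import all_boot all_order all_algebra.
Set Implicit Arguments. Unset Strict Implicit. Unset Printing Implicit Defensive.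
Import Order.TTheory GRing.Theory Num.Theory.

(* A weighted directed graph on a finite vertex type T is given by an edge
   relation e : rel T and integer weights w : T -> T -> int (only the values
   on edges matter). *)

Definition zero_tri (T : finType) (e : rel T) (w : T -> T -> int) (a b c : T) : bool :=
  [&& e a b, e b c, e c a & (w a b + w b c + w c a == 0)%R].

Definition has_zero_tri (T : finType) (e : rel T) (w : T -> T -> int) : Prop :=
  exists a b c, zero_tri e w a b c.

(* number of zero-weight triangles, counted as ordered triples (a,b,c);
   every triangle is counted 3 times (its rotations), which does not change parity *)
Definition num_zero_tri (T : finType) (e : rel T) (w : T -> T -> int) : nat :=
  #|[set t : T * T * T | zero_tri e w t.1.1 t.1.2 t.2]|.

Definition edge_set (V : finType) (e : rel V) : {set V * V} :=
  [set p : V * V | e p.1 p.2].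

(* G' : vertices (u, i) with i : 'I_3, i = 0,1,2 standing for u_A, u_B, u_C;
   edges (u_A,v_B), (u_B,v_C), (u_C,v_A) for each edge (u,v) of G. *)
Definition Gp_edge (V : finType) (e : rel V) : rel (V * 'I_3) :=
  fun x y => e x.1 y.1 && (nat_of_ord y.2 == (x.2 + 1) %% 3).

Definition Gp_weight (V : finType) (w : V -> V -> int) : V * 'I_3 -> V * 'I_3 -> int :=
  fun x y => w x.1 y.1.

(* G'' : K = set of pairs (u,v) whose edge (u_B,v_C) is KEPT (a subset of E(G)),
   X = set of u whose vertex u_A is KEPT.  A deleted vertex loses its incident
   edges, so G'' is modelled on the same vertex type with the restricted
   edge relation. *)
Definition Gpp_present (V : finType) (X : {set V}) (x : V * 'I_3) : bool :=
  (nat_of_ord x.2 != 0) || (x.1 \in X).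

Definition Gpp_edge (V : finType) (e : rel V) (K : {set V * V}) (X : {set V})
  : rel (V * 'I_3) :=
  fun x y => [&& Gp_edge e x y, Gpp_present X x, Gpp_present X y &
              (if nat_of_ord x.2 == 1 then (x.1, y.1) \in K else true)].

From HB Require Import structures.
From mathcomp Require Import all_boot all_order all_algebra.
Set Implicit Arguments. Unset Strict Implicit. Unset Printing Implicit Defensive.
Import Order.TTheory GRing.Theory Num.Theory.

(* A zero-weight triangle of G'' visits the layers A, B, C cyclically, so the
   zero-weight triangles of G'' are exactly the three rotations of the lifts of
   the zero-weight triangles (u, v, x) of G with u_A and (v_B, x_C) kept; in
   particular G'' has none if G has none, and the parity of their number is
   the parity of the number N(K, X) of such triangles of G.  Fix one
   zero-weight triangle (u, v, x) of G and toggle the membership of u in X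
   and of (v, x) in K.  A triangle of G is counted by an odd number of the
   four resulting values of N iff it is (u, v, x) itself, so these four
   values have odd sum.  Hence every orbit of this action of (Z/2)^2 contains
   an outcome with an odd count, and the good outcomes are at least a
   quarter of all outcomes. *)

Section Toggle.
Variable T : finType.

Definition settog (A : {set T}) (a : T) : {set T} := [set x | (x \in A) (+) (x == a)].

Lemma in_settog (A : {set T}) a x : (x \in settog A a) = (x \in A) (+) (x == a).
Proof. by rewrite inE. Qed.

Lemma settogK a : involutive (settog^~ a).
Proof. by move=> A; apply/setP => x; rewrite !in_settog -addbA addbb addbF. Qed.

Lemma settog_sub (A B : {set T}) a : A \subset B -> a \in B -> settog A a \subset B.
Proof.
move=> /subsetP sAB aB; apply/subsetP => x; rewrite in_settog.
by case: eqP => [->|_]; rewrite ?addbT ?addbF // => /sAB.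
Qed.

End Toggle.

Definition settog_pair (A B : finType) (a : A) (b : B) (s : bool * bool)
    (p : {set A} * {set B}) :=
  (if s.1 then settog p.1 a else p.1, if s.2 then settog p.2 b else p.2).

Lemma settog_pair_inj (A B : finType) (a : A) (b : B) s : injective (settog_pair a b s).
Proof.
apply: (inv_inj (_ : involutive _)) => -[P Q].
by case: s => [[] []]; rewrite /settog_pair /= ?settogK.
Qed.

Lemma odd_card (T : finType) (A : {pred T}) : odd #|A| = \big[addb/false]_t (t \in A).
Proof.
by rewrite -sum1_card big_mkcond (big_morph odd oddD (erefl (odd 0))); apply: eq_bigr => t _; case: (t \in A).
Qed.

Lemma odd_card_preimI_settog (T A B : finType) (P : {set T}) (a : T -> A) (b : T -> B)
    (X : {set A}) (K : {set B}) x y :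
  odd #|P :&: a @^-1: X :&: b @^-1: K|
  (+) odd #|P :&: a @^-1: settog X x :&: b @^-1: K|
  (+) odd #|P :&: a @^-1: X :&: b @^-1: settog K y|
  (+) odd #|P :&: a @^-1: settog X x :&: b @^-1: settog K y|
  = odd #|P :&: a @^-1: [set x] :&: b @^-1: [set y]|.
Proof.
rewrite !odd_card -!big_split /=.
apply: eq_bigr => t _; rewrite !inE.
by case: (t \in P); case: (a t \in X); case: (a t == x); case: (b t \in K); case: (b t == y).
Qed.

Lemma leq_card_bigcup (I T : finType) (P : pred I) (F : I -> {set T}) :
  #|\bigcup_(i | P i) F i| <= \sum_(i | P i) #|F i|.
Proof.
elim/big_rec2: _ => [|i U n _ leUn]; first by rewrite cards0.
exact: leq_trans (leq_card_setU _ _) (leq_add _ leUn).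
Qed.

Section Triangles.
Variables (T : finType) (e : rel T) (w : T -> T -> int).

Definition zero_tris : {set T * T * T} := [set t | zero_tri e w t.1.1 t.1.2 t.2].

Definition rot_tri (t : T * T * T) : T * T * T := (t.1.2, t.2, t.1.1).

Lemma zero_tri_rot a b c : zero_tri e w b c a = zero_tri e w a b c.
Proof.
rewrite /zero_tri [(w b c + _ + _)%R]addrC addrA.
by case: (e a b); case: (e b c); case: (e c a).
Qed.

Lemma mem_zero_tris_iter_rot n t : (iter n rot_tri t \in zero_tris) = (t \in zero_tris).
Proof. by elim: n => //= n <-; rewrite !inE zero_tri_rot. Qed.

End Triangles.

Section Construction.
Variables (V : finType) (e : rel V) (w : V -> V -> int).

Definition layerA : 'I_3 := @Ordinal 3 0 isT.
Definition layerB : 'I_3 := @Ordinal 3 1 isT.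
Definition layerC : 'I_3 := @Ordinal 3 2 isT.

Definition lift_tri (t : V * V * V) : (V * 'I_3) * (V * 'I_3) * (V * 'I_3) :=
  ((t.1.1, layerA), (t.1.2, layerB), (t.2, layerC)).

Definition rot_lift (p : 'I_3 * (V * V * V)) := iter p.1 (@rot_tri _) (lift_tri p.2).

Definition kept_zero_tris (K : {set V * V}) (X : {set V}) : {set V * V * V} :=
  zero_tris e w :&: (fun t => t.1.1) @^-1: X :&: (fun t => (t.1.2, t.2)) @^-1: K.

Lemma rot_lift_inj : injective rot_lift.
Proof.
move=> [[[|[|[|i]]] Hi] [[u v] x]] [[[|[|[|j]]] Hj] [[u' v' x']]] //;
  rewrite /rot_lift /= => [[-> -> ->]]; congr (_, _); exact: val_inj.
Qed.

Lemma Gp_triangle_rot_lift x y z :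
  Gp_edge e x y -> Gp_edge e y z -> exists p, (x, y, z) = rot_lift p.
Proof.
case: x y z => [a [[|[|[|i]]] Hi]] [b j] [c k] // /andP[_ /eqP /= Hj] /andP[_ /eqP /= Hk].
- exists (layerA, (a, b, c)).
  by congr (_, _, _); congr (_, _); apply: val_inj; rewrite /= ?Hk ?Hj.
- exists (layerB, (c, a, b)).
  by congr (_, _, _); congr (_, _); apply: val_inj; rewrite /= ?Hk ?Hj.
- exists (layerC, (b, c, a)).
  by congr (_, _, _); congr (_, _); apply: val_inj; rewrite /= ?Hk ?Hj.
Qed.

Variables (K : {set V * V}) (X : {set V}).

Lemma mem_zero_tris_rot_lift p :
  (rot_lift p \in zero_tris (Gpp_edge e K X) (Gp_weight w)) = (p.2 \in kept_zero_tris K X).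
Proof.
rewrite /rot_lift mem_zero_tris_iter_rot; case: p => i [[u v] x].
rewrite !inE /zero_tri /Gpp_edge /Gp_edge /Gpp_present /Gp_weight /=.
by case: (e u v); case: (e v x); case: (e x u); case: (u \in X); case: ((v, x) \in K);
  rewrite /= ?andbT ?andbF.
Qed.

Lemma zero_tris_Gpp :
  zero_tris (Gpp_edge e K X) (Gp_weight w) = rot_lift @: setX setT (kept_zero_tris K X).
Proof.
apply/setP => s; apply/idP/imsetP => [s_tri|[p p_kept ->]]; last first.
  by rewrite mem_zero_tris_rot_lift; move: p_kept; rewrite inE => /andP[].
have [p def_s] : exists p, s = rot_lift p.
  move: s_tri; rewrite inE; case: s => [[x y] z] /and4P[/andP[xy _] /andP[yz _] _ _].
  exact: Gp_triangle_rot_lift.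
by exists p => //; rewrite inE /= in_setT -mem_zero_tris_rot_lift -def_s.
Qed.

Lemma num_zero_tri_Gpp :
  num_zero_tri (Gpp_edge e K X) (Gp_weight w) = 3 * #|kept_zero_tris K X|.
Proof.
by rewrite /num_zero_tri -/(zero_tris _ _) zero_tris_Gpp card_imset ?cardsX ?cardsT ?card_ord //;
  exact: rot_lift_inj.
Qed.

End Construction.

Section Resampling.
Variables (V : finType) (e : rel V) (w : V -> V -> int).

Lemma odd_kept_zero_tris_settog K X u y :
  odd #|kept_zero_tris e w K X|
  (+) odd #|kept_zero_tris e w K (settog X u)|
  (+) odd #|kept_zero_tris e w (settog K y) X|
  (+) odd #|kept_zero_tris e w (settog K y) (settog X u)|
  = odd #|kept_zero_tris e w [set y] [set u]|.
Proof. exact: odd_card_preimI_settog. Qed.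

Lemma kept_zero_tris_set1 u v x :
  zero_tri e w u v x -> kept_zero_tris e w [set (v, x)] [set u] = [set (u, v, x)].
Proof.
move=> uvx; apply/setP => -[[a b] c]; rewrite !inE /=.
have [[-> -> ->]|ne] := eqVneq (a, b, c) (u, v, x); first by rewrite uvx !eqxx.
apply/negbTE/andP => -[/andP[_ /eqP au] /eqP [bv cx]].
by move: ne; rewrite au bv cx eqxx.
Qed.

Lemma exists_odd_kept_zero_tris K X u v x :
  zero_tri e w u v x ->
  exists s, let p := settog_pair (v, x) u s (K, X) in odd #|kept_zero_tris e w p.1 p.2|.
Proof.
move=> uvx; have := odd_kept_zero_tris_settog K X u (v, x).
rewrite kept_zero_tris_set1 // cards1 => parity.
apply/existsP; apply: contraLR parity; rewrite negb_exists => /forallP even.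
move: (even (false, false)) (even (false, true)) (even (true, false)) (even (true, true)).
by rewrite /= => /negbTE-> /negbTE-> /negbTE-> /negbTE->.
Qed.

End Resampling.

Theorem mainTheorem15 (V : finType) (e : rel V) (w : V -> V -> int)
    (Hloop : irreflexive e) :
  (~ has_zero_tri e w ->
     forall (K : {set V * V}) (X : {set V}), K \subset edge_set e ->
       ~ has_zero_tri (Gpp_edge e K X) (Gp_weight w)) /\
  (has_zero_tri e w ->
     #|[set p : {set V * V} * {set V} | p.1 \subset edge_set e]|
     <= 4 * #|[set p : {set V * V} * {set V} |
                (p.1 \subset edge_set e)
                && odd (num_zero_tri (Gpp_edge e p.1 p.2) (Gp_weight w))]|).
Proof.
split=> [no_tri K X _ [a [b [c abc]]] | [u [v [x uvx]]]].
  have : (a, b, c) \in zero_tris (Gpp_edge e K X) (Gp_weight w) by rewrite inE.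
  rewrite zero_tris_Gpp => /imsetP[[i [[u v] x]]]; rewrite !inE /= => /andP[/andP[uvx _] _] _.
  by apply: no_tri; exists u, v, x.
set Good := [set p | _ && _]; set All := [set p | _].
have vx_edge : (v, x) \in edge_set e by rewrite inE; case/and4P: uvx.
have cover : All \subset \bigcup_(s : bool * bool) settog_pair (v, x) u s @^-1: Good.
  apply/subsetP => -[K X]; rewrite inE /= => sKE.
  have [s odd_s] := exists_odd_kept_zero_tris K X uvx.
  apply/bigcupP; exists s => //; rewrite !inE num_zero_tri_Gpp oddM odd_s /= andbT.
  by case: s {odd_s} => -[] ? //=; exact: settog_sub.
apply: leq_trans (subset_leq_card cover) (leq_trans (leq_card_bigcup _ _) _).
rewrite (eq_bigr (fun _ => #|Good|)) ?sum_nat_const ?card_prod ?card_bool // => s _.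
exact/card_preimset/settog_pair_inj.
Qed.
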